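(* Let $H=(V,F)$ with $V=\{1,\dots,n\}$ be a graph with at least one edge, $k$ an integer, and $\chi:V_0\to\{1,\dots,k\}$ a proper coloring of $H[V_0]$ for some $V_0\subseteq V$. Let $G$ be the graph obtained as follows: start with $G=H$; add vertices $a,a',b,b'$ and edges $\{a,a'\},\{b,b'\},\{a,b\}$; for each $j\in V_0$ with $\chi(j)\in\{2,\dots,k-1\}$ add vertices $j(1),j(2)$ and edges $\{j,j(1)\},\{j,j(2)\},\{j(1),j(2)\},\{a,j\},\{b,j\},\{a,j(2)\},\{b,j(1)\}$; for each $j\in V_0$ with $\chi(j)=1$ add a vertex $j(2)$ and edges $\{j,j(2)\},\{b,j\},\{a,j(2)\}$; for each $j\in V_0$ with $\chi(j)=k$ add a vertex $j(1)$ and edges $\{j,j(1)\},\{a,j\},\{b,j(1)\}$. Then $tw(G)\le tw(H)+2$ and $pw(G)\le pw(H)+4$.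
   Context: $tw$ and $pw$ denote treewidth and pathwidth. *)

From mathcomp Require Import all_boot.
Set Implicit Arguments. Unset Strict Implicit. Unset Printing Implicit Defensive.

Definition acyclic_rel m (e : rel 'I_m) : Prop :=
  forall s : seq 'I_m, uniq s -> 2 < size s -> ~~ cycle e s.

Definition is_tree m (e : rel 'I_m) : Prop :=
  [/\ 0 < m, symmetric e, irreflexive e,
      (forall i j, connect e i j) & acyclic_rel e].

Definition tw_le (T : finType) (V : {set T}) (E : rel T) (w : nat) : Prop :=
  exists m (e : rel 'I_m) (B : 'I_m -> {set T}),
    is_tree e /\
    [/\ (forall i, B i \subset V),
        (forall v, v \in V -> exists i, v \in B i),
        (forall x y, x \in V -> y \in V -> E x y -> exists i, (x \in B i) && (y \in B i)),
        (forall v i j, v \in B i -> v \in B j ->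
            connect [rel x y | e x y && (v \in B y)] i j)
      & (forall i, #|B i| <= w.+1)].

Definition pw_le (T : finType) (V : {set T}) (E : rel T) (w : nat) : Prop :=
  exists m (B : 'I_m -> {set T}),
    [/\ (forall i, B i \subset V),
        (forall v, v \in V -> exists i, v \in B i),
        (forall x y, x \in V -> y \in V -> E x y -> exists i, (x \in B i) && (y \in B i)),
        (forall v (i j l : 'I_m), i <= j -> j <= l -> v \in B i -> v \in B l -> v \in B j)
      & (forall i, #|B i| <= w.+1)].

(* ambient vertex type: original vertices j, copies j(1), j(2), and a,a',b,b' *)
Definition gvert (n : nat) : finType := ('I_n + ('I_n + ('I_n + 'I_4)))%type.

Section Constr.
Variables (n : nat) (E : rel 'I_n) (k : nat) (V0 : {set 'I_n}) (chi : 'I_n -> nat).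

Definition orig (j : 'I_n) : gvert n := inl j.
Definition vj1 (j : 'I_n) : gvert n := inr (inl j).
Definition vj2 (j : 'I_n) : gvert n := inr (inr (inl j)).
Definition va  : gvert n := inr (inr (inr (@Ordinal 4 0 isT))).
Definition va' : gvert n := inr (inr (inr (@Ordinal 4 1 isT))).
Definition vb  : gvert n := inr (inr (inr (@Ordinal 4 2 isT))).
Definition vb' : gvert n := inr (inr (inr (@Ordinal 4 3 isT))).

Definition midc (j : 'I_n) : bool := (1 < chi j) && (chi j < k).

Definition GV : {set gvert n} :=
  [set x | [|| [exists u, x == orig u],
              x \in [set va; va'; vb; vb'],
              [exists j, [&& j \in V0, midc j || (chi j == k) & x == vj1 j]]
            | [exists j, [&& j \in V0, midc j || (chi j == 1) & x == vj2 j]]]].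

Definition gadj (x y : gvert n) : bool :=
  [|| [exists u, exists v, [&& x == orig u, y == orig v & E u v]],
      (x == va) && (y == va'), (x == vb) && (y == vb'), (x == va) && (y == vb),
      [exists j, [&& j \in V0, midc j &
         [|| (x == orig j) && (y == vj1 j), (x == orig j) && (y == vj2 j),
             (x == vj1 j) && (y == vj2 j), (x == va) && (y == orig j),
             (x == vb) && (y == orig j), (x == va) && (y == vj2 j)
           | (x == vb) && (y == vj1 j)]]],
      [exists j, [&& j \in V0, chi j == 1 &
         [|| (x == orig j) && (y == vj2 j), (x == vb) && (y == orig j)
           | (x == va) && (y == vj2 j)]]]
    | [exists j, [&& j \in V0, chi j == k &
         [|| (x == orig j) && (y == vj1 j), (x == va) && (y == orig j)
           | (x == vb) && (y == vj1 j)]]]].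

Definition GE : rel (gvert n) := fun x y => gadj x y || gadj y x.

End Constr.

From mathcomp Require Import all_boot zify.
Set Implicit Arguments. Unset Strict Implicit. Unset Printing Implicit Defensive.

(* Adding a and b to every bag of a decomposition of H costs 2.  In a tree
   decomposition, hang the bag {j, a, b, j(1)} below a bag containing j, the
   bag {j, a, j(1), j(2)} below it, and {a, a', b, b'} anywhere; these bags
   have 4 <= tw(H) + 3 vertices because H has an edge.  In a path
   decomposition, follow each bag B_i by copies B_i + {a, b, j(1), j(2)}, one
   for each vertex j assigned to i, and add a', b' to one bag B_i + {a, b}. *)

Section SumEq.
Variables A B : eqType.
Lemma inl_eq (a a' : A) : (inl a == inl a' :> A + B) = (a == a'). Proof. by []. Qed.
Lemma inr_eq (b b' : B) : (inr b == inr b' :> A + B) = (b == b'). Proof. by []. Qed.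
Lemma inl_inr_eq (a : A) (b : B) : (inl a == inr b) = false. Proof. by []. Qed.
Lemma inr_inl_eq (a : A) (b : B) : (inr b == inl a) = false. Proof. by []. Qed.
End SumEq.

Definition eq_inlrE := (inl_eq, inr_eq, inl_inr_eq, inr_inl_eq).

Lemma all_inl (A B : eqType) (s : seq (A + B)) :
  {in s, forall x, exists a, x = inl a} -> exists s' : seq A, s = map inl s'.
Proof.
elim: s => [|x s IHs] s_inl; first by exists [::].
have [a ->] := s_inl x (mem_head x s).
have [s' ->] : exists s' : seq A, s = map inl s'.
  by apply: IHs => y ys; apply: s_inl; rewrite inE ys orbT.
by exists (a :: s').
Qed.

Lemma card_set2_le (T : finType) (a b : T) : #|[set a; b]| <= 2.
Proof. by rewrite cards2; case: (_ != _). Qed.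

Lemma subset_set4 (T : finType) (a b c d : T) (A : {set T}) :
  a \in A -> b \in A -> c \in A -> d \in A -> [set a; b; c; d] \subset A.
Proof. by move=> aA bA cA dA; apply/subsetP => x; rewrite !inE -!orbA => /or4P [] /eqP ->. Qed.

Lemma card_set4_le (T : finType) (a b c d : T) : #|[set a; b; c; d]| <= 4.
Proof.
rewrite (@eq_card _ _ (mem [:: a; b; c; d])) ?card_size // => x.
by rewrite !inE !orbA.
Qed.

Lemma homo_connect (T1 T2 : finType) (f : T1 -> T2) (r1 : rel T1) (r2 : rel T2) :
  {homo f : x y / r1 x y >-> r2 x y} -> {homo f : x y / connect r1 x y >-> connect r2 x y}.
Proof.
move=> f_homo x y /connectP [p r1p ->]; apply/connectP; exists (map f p).
  by rewrite path_map; apply: sub_path r1p => a b /f_homo.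
by rewrite last_map.
Qed.

Lemma prev_neq_next (T : eqType) (s : seq T) x :
  uniq s -> 2 < size s -> x \in s -> prev s x != next s x.
Proof.
move=> s_uniq s_big /rot_to [i s' s_rot].
rewrite -(prev_rot i s_uniq) -(next_rot i s_uniq) s_rot.
have : uniq (x :: s') by rewrite -s_rot rot_uniq.
have : 2 < size (x :: s') by rewrite -s_rot size_rot.
case: s' {s_rot} => [|y [|z t]] // _ xs_uniq; apply/eqP => prev_next.
have := next_prev xs_uniq x; rewrite prev_next.
move: xs_uniq => /and3P [+ + _]; rewrite !inE !negb_or => /and3P [/negbTE xy xz _] /andP [yz _].
by rewrite /= eqxx eq_sym xy /= eqxx => zx; rewrite zx eqxx in xz.
Qed.

Lemma leaf_notin_cycle (T : eqType) (r : rel T) (s : seq T) x :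
  symmetric r -> uniq s -> 2 < size s -> cycle r s ->
  {in s &, forall y z, r x y -> r x z -> y = z} -> x \notin s.
Proof.
move=> r_sym s_uniq s_big s_cycle x_leaf; apply/negP => xs.
have := prev_neq_next s_uniq s_big xs.
rewrite (x_leaf (prev s x) (next s x)) ?mem_prev ?mem_next ?eqxx //.
- by rewrite r_sym prev_cycle.
- exact: next_cycle.
Qed.

Section RestrictedConnect.
Variables (T : finType) (e : rel T) (P : pred T).
Hypothesis e_sym : symmetric e.

Lemma connect_restrict_sym x y : P x ->
  connect [rel a b | e a b && P b] x y -> connect [rel a b | e a b && P b] y x.
Proof.
move=> Px /connectP [p]; elim: p x Px => [|z p IHp] x Px /=; first by move=> _ ->.
case/andP => /andP [exz Pz] zp y_last; apply: connect_trans (IHp z Pz zp y_last) _.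
by apply: connect1; rewrite /= e_sym exz.
Qed.

Lemma connect_restrict_hub h :
  (forall x, P x -> connect [rel a b | e a b && P b] x h) ->
  forall x y, P x -> P y -> connect [rel a b | e a b && P b] x y.
Proof.
move=> to_h x y Px Py; apply: connect_trans (to_h x Px) _.
exact: connect_restrict_sym (to_h y Py).
Qed.

End RestrictedConnect.

Section Decompositions.
Variables (T : finType) (V : {set T}) (E : rel T).

Lemma tw_le_fin (I : finType) (e : rel I) (B : I -> {set T}) w :
  0 < #|I| -> symmetric e -> irreflexive e -> (forall i j, connect e i j) ->
  (forall s : seq I, uniq s -> 2 < size s -> ~~ cycle e s) ->
  (forall i, B i \subset V) ->
  (forall v, v \in V -> exists i, v \in B i) ->
  (forall x y, x \in V -> y \in V -> E x y -> exists i, (x \in B i) && (y \in B i)) ->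
  (forall v i j, v \in B i -> v \in B j -> connect [rel x y | e x y && (v \in B y)] i j) ->
  (forall i, #|B i| <= w.+1) -> tw_le V E w.
Proof.
move=> I_gt0 e_sym e_irr e_conn e_acyc B_sub B_cover B_edge B_coh B_card.
pose f := @enum_val I predT; pose g := @enum_rank I.
have fK : cancel f g by move=> i; rewrite /f /g enum_valK.
have gK : cancel g f by move=> a; rewrite /f /g enum_rankK.
have connect_f r i j : connect r (f i) (f j) -> connect (relpre f r) i j.
  by rewrite -{2}(fK i) -{2}(fK j); apply: homo_connect => a b /=; rewrite !gK.
exists #|I|, (relpre f e), (fun i => B (f i)); split; first split => //.
- by move=> a b /=; rewrite e_sym.
- by move=> a /=; rewrite e_irr.
- by move=> a b; apply: connect_f.
- move=> s s_uniq s_big; rewrite -cycle_map; apply: e_acyc; last by rewrite size_map.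
  by rewrite map_inj_uniq //; apply: can_inj fK.
split => //.
- by move=> v /B_cover [i vBi]; exists (g i); rewrite gK.
- move=> x y xV yV /(B_edge _ _ xV yV) [i xyBi].
  by exists (g i); rewrite gK.
- by move=> v i j vBi vBj; apply: (connect_f [rel x y | e x y && (v \in B y)]); apply: B_coh.
Qed.

Lemma tw_le_gt0 x y w :
  irreflexive E -> x \in V -> y \in V -> E x y -> tw_le V E w -> 0 < w.
Proof.
move=> E_irr xV yV Exy [m [e [B [_ [_ _ B_edge _ B_card]]]]].
have [i /andP [xBi yBi]] := B_edge x y xV yV Exy.
have xy : x != y by apply: contraTneq Exy => ->; rewrite E_irr.
have : #|[set x; y]| <= #|B i|.
  by apply: subset_leq_card; apply/subsetP => z; rewrite !inE => /orP [] /eqP ->.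
by rewrite cards2 xy => /leq_trans /(_ (B_card i)).
Qed.

Section Subset.
Variable V' : {set T}.
Hypothesis VV' : V \subset V'.

Lemma tw_le_subset w : tw_le V' E w -> tw_le V E w.
Proof.
move=> [m [e [B [e_tree [_ B_cover B_edge B_coh B_card]]]]].
exists m, e, (fun i => B i :&: V); split=> //; split.
- by move=> i; apply: subsetIr.
- by move=> v vV; have [i vBi] := B_cover v (subsetP VV' v vV); exists i; rewrite inE vBi.
- move=> x y xV yV Exy.
  have [i /andP [xBi yBi]] := B_edge x y (subsetP VV' x xV) (subsetP VV' y yV) Exy.
  by exists i; rewrite !inE xBi yBi xV.
- move=> v i j; rewrite !inE => /andP [vBi vV] /andP [vBj _].
  rewrite (eq_connect (e' := [rel x y | e x y && (v \in B y)])) ?B_coh //.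
  by move=> a b; rewrite /= inE vV andbT.
- by move=> i; apply: leq_trans (subset_leq_card (subsetIl _ _)) (B_card i).
Qed.

Lemma pw_le_subset w : pw_le V' E w -> pw_le V E w.
Proof.
move=> [m [B [_ B_cover B_edge B_int B_card]]].
exists m, (fun i => B i :&: V); split.
- by move=> i; apply: subsetIr.
- by move=> v vV; have [i vBi] := B_cover v (subsetP VV' v vV); exists i; rewrite inE vBi.
- move=> x y xV yV Exy.
  have [i /andP [xBi yBi]] := B_edge x y (subsetP VV' x xV) (subsetP VV' y yV) Exy.
  by exists i; rewrite !inE xBi yBi xV.
- move=> v i j l ij jl; rewrite !inE => /andP [vBi vV] /andP [vBl _].
  by rewrite (B_int v i j l ij jl vBi vBl) vV.
- by move=> i; apply: leq_trans (subset_leq_card (subsetIl _ _)) (B_card i).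
Qed.

End Subset.
End Decompositions.

Variant gvert_spec n : gvert n -> Type :=
| GvertOrig u : gvert_spec (orig u)
| GvertJ1 j : gvert_spec (vj1 j)
| GvertJ2 j : gvert_spec (vj2 j)
| GvertA : gvert_spec (va n)
| GvertA' : gvert_spec (va' n)
| GvertB : gvert_spec (vb n)
| GvertB' : gvert_spec (vb' n).

Lemma gvertP n (x : gvert n) : gvert_spec x.
Proof.
case: x => [u|[j|[j|[[|[|[|[|c]]]] c_lt]]]] //; first exact: GvertOrig.
- exact: GvertJ1.
- exact: GvertJ2.
- by rewrite (bool_irrelevance c_lt isT); apply: GvertA.
- by rewrite (bool_irrelevance c_lt isT); apply: GvertA'.
- by rewrite (bool_irrelevance c_lt isT); apply: GvertB.
- by rewrite (bool_irrelevance c_lt isT); apply: GvertB'.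
Qed.

Lemma mem_orig_imset n (A : {set 'I_n}) u : (orig u \in @orig n @: A) = (u \in A).
Proof. by rewrite mem_imset // => a b []. Qed.

Lemma inr_notin_orig_imset n (A : {set 'I_n}) z : (inr z \in @orig n @: A) = false.
Proof. by apply/imsetP => [[x _]]. Qed.

Definition gvert_memE := (mem_orig_imset, inr_notin_orig_imset, eq_inlrE).

Section Gadgets.
Variables (n : nat) (E : rel 'I_n) (k : nat) (V0 : {set 'I_n}) (chi : 'I_n -> nat).

Definition ab_bag : {set gvert n} := [set va n; va' n; vb n; vb' n].
Definition gadget_bag1 j : {set gvert n} := [set orig j; va n; vb n; vj1 j].
Definition gadget_bag2 j : {set gvert n} := [set orig j; va n; vj1 j; vj2 j].

Lemma GE_cover (I : Type) (C : I -> {set gvert n}) :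
  (forall u v, E u v -> exists c, (orig u \in C c) && (orig v \in C c)) ->
  (exists c, ab_bag \subset C c) ->
  (forall j, exists c, gadget_bag1 j \subset C c) ->
  (forall j, exists c, gadget_bag2 j \subset C c) ->
  forall x y, GE E k V0 chi x y -> exists c, (x \in C c) && (y \in C c).
Proof.
move=> C_edge C_ab C_gadget1 C_gadget2.
have in_bag (S : {set gvert n}) x y : (exists c, S \subset C c) ->
    x \in S -> y \in S -> exists c, (x \in C c) && (y \in C c).
  by move=> [c S_C] xS yS; exists c; rewrite !(subsetP S_C).
have in_gadget j x y :
    (x \in gadget_bag1 j) && (y \in gadget_bag1 j) ||
    (x \in gadget_bag2 j) && (y \in gadget_bag2 j) ->
    exists c, (x \in C c) && (y \in C c).
  case/orP => /andP [xS yS]; first exact: in_bag (C_gadget1 j) xS yS.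
  exact: in_bag (C_gadget2 j) xS yS.
suff gadj_cover x y : gadj E k V0 chi x y -> exists c, (x \in C c) && (y \in C c).
  by move=> x y /orP [/gadj_cover // | /gadj_cover [c]]; exists c; rewrite andbC.
case/orP => [/existsP [u /existsP [v /and3P [/eqP -> /eqP -> /C_edge //]]] | ].
do 3 (case/orP => [/andP [/eqP -> /eqP ->]|];
  first by apply: (in_bag _ _ _ C_ab); rewrite !inE eqxx ?orbT).
case/or3P => /existsP [j /and3P [_ _]];
  repeat (case/orP => [/andP [/eqP -> /eqP ->]|]); try case/andP => [/eqP -> /eqP ->].
all: by apply: (in_gadget j); rewrite !inE !eq_inlrE /= !eqxx ?orbT.
Qed.
End Gadgets.

Section TreeDecomposition.
Variables (n m : nat) (e : rel 'I_m) (B : 'I_m -> {set 'I_n}).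
Variables (i0 : 'I_m) (p : 'I_n -> 'I_m).
Hypothesis e_sym : symmetric e.
Hypothesis e_irr : irreflexive e.
Hypothesis e_conn : forall i j, connect e i j.
Hypothesis e_acyclic : acyclic_rel e.
Hypothesis B_coherent : forall u i j, u \in B i -> u \in B j ->
  connect [rel x y | e x y && (u \in B y)] i j.
Hypothesis mem_B_p : forall u, u \in B (p u).

(* [inr (Some (j, false))] hangs below the node [p j] and carries gadget_bag1 j,
   [inr (Some (j, true))] is a leaf below it carrying gadget_bag2 j, and the
   leaf [inr None] below [i0] carries ab_bag. *)
Definition tnode := ('I_m + option ('I_n * bool))%type.

Definition tedge (x y : tnode) : bool :=
  match x, y with
  | inl i, inl i' => e i i'
  | inl i, inr (Some (j, false)) | inr (Some (j, false)), inl i => i == p j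
  | inr (Some (j, false)), inr (Some (j', true))
  | inr (Some (j, true)), inr (Some (j', false)) => j == j'
  | inl i, inr None | inr None, inl i => i == i0
  | _, _ => false
  end.

Definition tbag (x : tnode) : {set gvert n} :=
  match x with
  | inl i => @orig n @: B i :|: [set va n; vb n]
  | inr (Some (j, false)) => gadget_bag1 j
  | inr (Some (j, true)) => gadget_bag2 j
  | inr None => ab_bag n
  end.

Lemma tedge_sym : symmetric tedge.
Proof. by case=> [i|[[j []]|]] [i'|[[j' []]|]] //=; rewrite (e_sym, eq_sym). Qed.

Lemma tedge_irr : irreflexive tedge.
Proof. by case=> [i|[[j []]|]] /=; rewrite ?e_irr. Qed.

Lemma tedge_acyclic s : uniq s -> 2 < size s -> ~~ cycle tedge s.
Proof.
move=> s_uniq s_big; apply/negP => s_cycle.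
have leaf := leaf_notin_cycle tedge_sym s_uniq s_big s_cycle.
have notin_j2 j : inr (Some (j, true)) \notin s.
  by apply: leaf => [[?|[[? []]|]]] [?|[[? []]|]] //= _ _ /eqP <- /eqP <-.
have notin_ab : inr None \notin s.
  by apply: leaf => [[?|[[? []]|]]] [?|[[? []]|]] //= _ _ /eqP -> /eqP ->.
have notin_j1 j : inr (Some (j, false)) \notin s.
  apply: leaf => -[i|[[j1 []]|]] [i'|[[j2 []]|]] //=.
  - by move=> _ _ /eqP -> /eqP ->.
  - by move=> _ zs _ /eqP j_j2; rewrite -j_j2 (negbTE (notin_j2 j)) in zs.
  - by move=> ys _ /eqP j_j1; rewrite -j_j1 (negbTE (notin_j2 j)) in ys.
  - by move=> ys _ /eqP j_j1; rewrite -j_j1 (negbTE (notin_j2 j)) in ys.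
have [s' s_inl] : exists s', s = map inl s'.
  apply: all_inl => -[i|[[j []]|]] xs; first by exists i.
  - by rewrite (negbTE (notin_j2 j)) in xs.
  - by rewrite (negbTE (notin_j1 j)) in xs.
  - by rewrite (negbTE notin_ab) in xs.
move: s_uniq s_big s_cycle; rewrite s_inl map_inj_uniq ?size_map ?cycle_map; last by move=> a b [].
by move=> s'_uniq s'_big; apply/negP/e_acyclic.
Qed.

Lemma mem_tbag_orig u x : (orig u \in tbag x) =
  match x with inl i => u \in B i | inr (Some (j, _)) => j == u | inr None => false end.
Proof. by case: x => [i|[[j []]|]]; rewrite !inE !gvert_memE ?orbF. Qed.

Lemma mem_tbag_va x : va n \in tbag x.
Proof. by case: x => [i|[[j []]|]]; rewrite !inE !eqxx ?orbT. Qed.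

Lemma mem_tbag_vb x : (vb n \in tbag x) = if x is inr (Some (_, true)) then false else true.
Proof. by case: x => [i|[[j []]|]]; rewrite !inE !gvert_memE /= ?eqxx ?orbT. Qed.

Lemma mem_tbag_va' x : (va' n \in tbag x) = if x is inr None then true else false.
Proof. by case: x => [i|[[j []]|]]; rewrite !inE !gvert_memE /= ?eqxx ?orbT. Qed.

Lemma mem_tbag_vb' x : (vb' n \in tbag x) = if x is inr None then true else false.
Proof. by case: x => [i|[[j []]|]]; rewrite !inE !gvert_memE /= ?eqxx ?orbT. Qed.

Lemma mem_tbag_vj1 j x : (vj1 j \in tbag x) = if x is inr (Some (j', _)) then j' == j else false.
Proof. by case: x => [i|[[j' []]|]]; rewrite !inE !gvert_memE /= ?orbF // eq_sym. Qed.

Lemma mem_tbag_vj2 j x : (vj2 j \in tbag x) = if x is inr (Some (j', true)) then j' == j else false.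
Proof. by case: x => [i|[[j' []]|]]; rewrite !inE !gvert_memE /= ?orbF // eq_sym. Qed.

Lemma connect_to_root (P : pred tnode) :
  (forall i, P (inl i)) -> (forall j, P (inr (Some (j, false)))) -> P (inr None) ->
  forall x, connect [rel a b | tedge a b && P b] x (inl i0).
Proof.
move=> P_inl P_j1 P_ab.
have inl_root i : connect [rel a b | tedge a b && P b] (inl i) (inl i0).
  by apply: homo_connect (e_conn i i0) => a b /= ->; rewrite P_inl.
have j1_root j : connect [rel a b | tedge a b && P b] (inr (Some (j, false))) (inl i0).
  by apply: connect_trans (inl_root (p j)); apply: connect1; rewrite /= eqxx P_inl.
case=> [i|[[j []]|]]; [exact: inl_root | | exact: j1_root |].
- by apply: connect_trans (j1_root j); apply: connect1; rewrite /= eqxx P_j1.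
- by apply: connect1; rewrite /= eqxx P_inl.
Qed.

Lemma tedge_connect x y : connect tedge x y.
Proof.
have to_root z : connect tedge z (inl i0).
  rewrite (eq_connect (e' := [rel a b | tedge a b && predT b])) ?connect_to_root //.
  by move=> a b /=; rewrite andbT.
by apply: connect_trans (to_root x) _; rewrite (sym_connect_sym tedge_sym) to_root.
Qed.

Lemma tbag_coherent v x y : v \in tbag x -> v \in tbag y ->
  connect [rel a b | tedge a b && (v \in tbag b)] x y.
Proof.
suff [h to_h] : exists h, forall x, v \in tbag x ->
    connect [rel a b | tedge a b && (v \in tbag b)] x h.
  exact: (connect_restrict_hub (P := fun b => v \in tbag b) tedge_sym to_h).
have step a b : tedge a b -> v \in tbag b -> connect [rel a b | tedge a b && (v \in tbag b)] a b.
  by move=> ab vb; apply: connect1; rewrite /= ab vb.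
case: (gvertP v) step => [u|j|j||||] step.
- exists (inl (p u)) => -[i|[[j []]|]]; rewrite mem_tbag_orig //.
  + move=> uBi; apply: homo_connect (B_coherent uBi (mem_B_p u)) => a b /andP [ab uBb].
    by apply/andP; rewrite mem_tbag_orig.
  + move=> /eqP ->; apply: connect_trans (step _ (inr (Some (u, false))) _ _) (step _ _ _ _);
      by rewrite ?mem_tbag_orig /= ?eqxx.
  + by move=> /eqP ->; apply: step; rewrite ?mem_tbag_orig /= ?eqxx.
- exists (inr (Some (j, false))) => -[i|[[j' []]|]]; rewrite mem_tbag_vj1 // => /eqP ->.
  + by apply: step; rewrite ?mem_tbag_vj1 /= ?eqxx.
  + exact: connect0.
- by exists (inr (Some (j, true))) => -[i|[[j' []]|]]; rewrite mem_tbag_vj2 // => /eqP ->.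
- by exists (inl i0) => z _; apply: connect_to_root => *; rewrite mem_tbag_va.
- by exists (inr None) => -[i|[[j' []]|]]; rewrite mem_tbag_va'.
- by exists (inl i0) => z _; apply: connect_to_root => *; rewrite mem_tbag_vb.
- by exists (inr None) => -[i|[[j' []]|]]; rewrite mem_tbag_vb'.
Qed.

Lemma tbag_cover v : exists x, v \in tbag x.
Proof.
case: (gvertP v) => [u|j|j||||].
- by exists (inl (p u)); rewrite mem_tbag_orig.
- by exists (inr (Some (j, false))); rewrite mem_tbag_vj1.
- by exists (inr (Some (j, true))); rewrite mem_tbag_vj2.
all: by exists (inr None); rewrite !inE eqxx ?orbT.
Qed.

Lemma tbag_card w : 0 < w -> (forall i, #|B i| <= w.+1) -> forall x, #|tbag x| <= (w + 2).+1.
Proof.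
move=> w_gt0 B_card [i|[[j []]|]] /=.
- apply: leq_trans (leq_card_setU _ _) _.
  have imset_card := leq_trans (leq_imset_card (@orig n) (B i)) (B_card i).
  by apply: leq_trans (leq_add imset_card (card_set2_le _ _)) _; lia.
all: by apply: leq_trans (card_set4_le _ _ _ _) _; lia.
Qed.

End TreeDecomposition.

Lemma tw_le_gadget n (E : rel 'I_n) w : 0 < w -> tw_le [set: 'I_n] E w ->
  forall k V0 chi, tw_le [set: gvert n] (GE E k V0 chi) (w + 2).
Proof.
move=> w_gt0 [m [e [B [[m_gt0 e_sym e_irr e_conn e_acyclic] [_ B_cover B_edge B_coh B_card]]]]].
move=> k V0 chi.
have [p mem_B_p] := fin_all_exists (fun u => B_cover u (in_setT u)).
pose i0 := Ordinal m_gt0.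
apply: (@tw_le_fin _ _ _ (tnode n m) (tedge e i0 p) (tbag B)).
- by apply/card_gt0P; exists (inl i0).
- exact: tedge_sym.
- exact: tedge_irr.
- exact: tedge_connect.
- exact: tedge_acyclic.
- by move=> x; apply: subsetT.
- by move=> v _; apply: tbag_cover.
- move=> x y _ _; apply: GE_cover.
  + move=> u v /(B_edge u v (in_setT u) (in_setT v)) [i uv].
    by exists (inl i); rewrite !mem_tbag_orig.
  + by exists (inr None); apply: subxx.
  + by move=> j; exists (inr (Some (j, false))); apply: subxx.
  + by move=> j; exists (inr (Some (j, true))); apply: subxx.
- by move=> v x y; apply: tbag_coherent.
- exact: tbag_card.
Qed.

Section PathDecomposition.
Variables (n m : nat) (B : 'I_m -> {set 'I_n}) (p : 'I_n -> 'I_m) (i0 : 'I_m).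
Hypothesis mem_B_p : forall u, u \in B (p u).
Hypothesis B_interval : forall u (i j l : 'I_m), i <= j -> j <= l ->
  u \in B i -> u \in B l -> u \in B j.

(* [pnode] enumerates the pairs (block, position) lexicographically: block i
   starts with the bag [start i], followed by one slot per vertex j with
   [p j = i], where the two copies of j are added. *)
Local Notation pnode := 'I_(m * n.+1).

Lemma block_subproof (x : pnode) : x %/ n.+1 < m.
Proof. by rewrite ltn_divLR. Qed.

Definition block (x : pnode) : 'I_m := Ordinal (block_subproof x).

Lemma block_mono (x y : pnode) : x <= y -> block x <= block y.
Proof. exact: leq_div2r. Qed.

Lemma start_subproof (i : 'I_m) : i * n.+1 < m * n.+1.
Proof. by rewrite ltn_pmul2r. Qed.

Definition start i : pnode := Ordinal (start_subproof i).

Lemma block_start i : block (start i) = i.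
Proof. by apply: val_inj; rewrite /= mulnK. Qed.

Lemma slot_subproof j : p j * n.+1 + j.+1 < m * n.+1.
Proof. by have := ltn_ord j; have := ltn_ord (p j); nia. Qed.

Definition slot j : pnode := Ordinal (slot_subproof j).

Lemma block_slot j : block (slot j) = p j.
Proof. by apply: val_inj; rewrite /= divnMDl // divn_small ?addn0 // ltnS. Qed.

Lemma slot_mod j : slot j %% n.+1 = j.+1.
Proof. by rewrite modnMDl modn_small // ltnS. Qed.

Lemma slot_inj : injective slot.
Proof.
by move=> j j' /(congr1 (fun x : pnode => x %% n.+1)); rewrite !slot_mod => -[] /val_inj.
Qed.

Lemma slot_neq_start j i : slot j != start i.
Proof.
apply: contraTneq isT => /(congr1 (fun x : pnode => x %% n.+1)).
by rewrite slot_mod /= modnMl.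
Qed.

Definition extra (x : pnode) : {set gvert n} :=
  if [pick j | slot j == x] is Some j then [set vj1 j; vj2 j]
  else if x == start i0 then [set va' n; vb' n] else set0.

Definition pbag (x : pnode) : {set gvert n} :=
  @orig n @: B (block x) :|: [set va n; vb n] :|: extra x.

Lemma mem_pbag_orig u x : (orig u \in pbag x) = (u \in B (block x)).
Proof.
rewrite /pbag /extra; case: pickP => [j _|_]; last case: ifP => _.
all: by rewrite !inE !gvert_memE ?orbF.
Qed.

Lemma mem_pbag_va x : va n \in pbag x.
Proof. by rewrite !inE eqxx orbT. Qed.

Lemma mem_pbag_vb x : vb n \in pbag x.
Proof. by rewrite !inE eqxx !orbT. Qed.

Lemma mem_pbag_va' x : (va' n \in pbag x) = (x == start i0).
Proof.
rewrite /pbag /extra; case: pickP => [j /eqP <-|_]; last case: ifP => x_start.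
all: by rewrite !inE !gvert_memE /= ?(negbTE (slot_neq_start _ _)) ?x_start.
Qed.

Lemma mem_pbag_vb' x : (vb' n \in pbag x) = (x == start i0).
Proof.
rewrite /pbag /extra; case: pickP => [j /eqP <-|_]; last case: ifP => x_start.
all: by rewrite !inE !gvert_memE /= ?(negbTE (slot_neq_start _ _)) ?x_start ?orbT.
Qed.

Lemma mem_pbag_vj1 j x : (vj1 j \in pbag x) = (x == slot j).
Proof.
rewrite /pbag /extra; case: pickP => [j' /eqP <-|no_slot]; last case: ifP => _.
- by rewrite !inE !gvert_memE /= (inj_eq slot_inj) eq_sym orbF.
all: by rewrite !inE !gvert_memE /= eq_sym no_slot.
Qed.

Lemma mem_pbag_vj2 j x : (vj2 j \in pbag x) = (x == slot j).
Proof.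
rewrite /pbag /extra; case: pickP => [j' /eqP <-|no_slot]; last case: ifP => _.
- by rewrite !inE !gvert_memE /= (inj_eq slot_inj) eq_sym.
all: by rewrite !inE !gvert_memE /= eq_sym no_slot.
Qed.

Lemma pbag_interval v (x y z : pnode) : x <= y -> y <= z ->
  v \in pbag x -> v \in pbag z -> v \in pbag y.
Proof.
move=> xy yz.
have single c : (forall t, (v \in pbag t) = (t == c)) ->
    v \in pbag x -> v \in pbag z -> v \in pbag y.
  move=> vE; rewrite !vE => /eqP x_c /eqP z_c; subst x z.
  by apply/eqP/val_inj/anti_leq; rewrite xy yz.
case: (gvertP v) single => [u|j|j||||] single.
- by rewrite !mem_pbag_orig; apply: B_interval; apply: block_mono.
- by apply: single => t; apply: mem_pbag_vj1.
- by apply: single => t; apply: mem_pbag_vj2.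
- by move=> _ _; apply: mem_pbag_va.
- by apply: single => t; apply: mem_pbag_va'.
- by move=> _ _; apply: mem_pbag_vb.
- by apply: single => t; apply: mem_pbag_vb'.
Qed.

Lemma pbag_card w : (forall i, #|B i| <= w.+1) -> forall x, #|pbag x| <= (w + 4).+1.
Proof.
move=> B_card x.
have extra_card : #|extra x| <= 2.
  by rewrite /extra; case: pickP => [j _|_]; last case: ifP => _; rewrite ?cards0 ?card_set2_le.
have imset_card := leq_trans (leq_imset_card (@orig n) (B (block x))) (B_card (block x)).
rewrite /pbag; apply: leq_trans (leq_card_setU _ _) _.
apply: leq_trans (leq_add (leq_card_setU _ _) extra_card) _.
rewrite -addnA; apply: leq_trans (leq_add imset_card (leq_add (card_set2_le _ _) (leqnn 2))) _.
lia.
Qed.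

Lemma pbag_cover v : exists x, v \in pbag x.
Proof.
case: (gvertP v) => [u|j|j||||].
- by exists (start (p u)); rewrite mem_pbag_orig block_start.
- by exists (slot j); rewrite mem_pbag_vj1.
- by exists (slot j); rewrite mem_pbag_vj2.
all: exists (start i0); by rewrite ?mem_pbag_va ?mem_pbag_vb ?mem_pbag_va' ?mem_pbag_vb'.
Qed.

Lemma ab_bag_sub_pbag : ab_bag n \subset pbag (start i0).
Proof. by apply: subset_set4; rewrite ?mem_pbag_va ?mem_pbag_vb ?mem_pbag_va' ?mem_pbag_vb'. Qed.

Lemma gadget_bag1_sub_pbag j : gadget_bag1 j \subset pbag (slot j).
Proof.
by apply: subset_set4;
  rewrite ?mem_pbag_orig ?block_slot ?mem_B_p ?mem_pbag_vj1 ?mem_pbag_va ?mem_pbag_vb.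
Qed.

Lemma gadget_bag2_sub_pbag j : gadget_bag2 j \subset pbag (slot j).
Proof.
by apply: subset_set4;
  rewrite ?mem_pbag_orig ?block_slot ?mem_B_p ?mem_pbag_vj1 ?mem_pbag_vj2 ?mem_pbag_va.
Qed.

End PathDecomposition.

Lemma pw_le_gadget n (E : rel 'I_n) w : 0 < n -> pw_le [set: 'I_n] E w ->
  forall k V0 chi, pw_le [set: gvert n] (GE E k V0 chi) (w + 4).
Proof.
move=> n_gt0 [m [B [_ B_cover B_edge B_interval B_card]]] k V0 chi.
have [p mem_B_p] := fin_all_exists (fun u => B_cover u (in_setT u)).
pose i0 := p (Ordinal n_gt0).
exists (m * n.+1), (pbag B p i0); split.
- by move=> x; apply: subsetT.
- by move=> v _; apply: pbag_cover.
- move=> x y _ _; apply: GE_cover.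
  + move=> u v /(B_edge u v (in_setT u) (in_setT v)) [i uv].
    by exists (start n i); rewrite !mem_pbag_orig block_start.
  + by exists (start n i0); apply: ab_bag_sub_pbag.
  + by move=> j; exists (slot p j); apply: gadget_bag1_sub_pbag.
  + by move=> j; exists (slot p j); apply: gadget_bag2_sub_pbag.
- by move=> v x y z; apply: pbag_interval.
- exact: pbag_card.
Qed.

Theorem lemma8 (n : nat) (E : rel 'I_n) (k : nat) (V0 : {set 'I_n})
    (chi : 'I_n -> nat) :
  symmetric E -> irreflexive E -> (exists u v, E u v) ->
  (forall j, j \in V0 -> 1 <= chi j <= k) ->
  (forall u v, u \in V0 -> v \in V0 -> E u v -> chi u != chi v) ->
  (forall w, tw_le [set: 'I_n] E w ->
     tw_le (GV k V0 chi) (GE E k V0 chi) (w + 2)) /\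
  (forall w, pw_le [set: 'I_n] E w ->
     pw_le (GV k V0 chi) (GE E k V0 chi) (w + 4)).
Proof.
move=> _ E_irr [u [v Euv]] _ _; split=> w H_w.
- have w_gt0 := tw_le_gt0 E_irr (in_setT u) (in_setT v) Euv H_w.
  by apply: (tw_le_subset (subsetT _)); apply: tw_le_gadget.
- have n_gt0 : 0 < n := leq_ltn_trans (leq0n u) (ltn_ord u).
  by apply: (pw_le_subset (subsetT _)); apply: pw_le_gadget.
Qed.
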